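(* Let $F$ be a field of finite characteristic $p$ and let $n \in \mathbb{N}$ with $p \nmid n$. Then the polynomial $x^n + y^n + x^n y^n$ is irreducible in the polynomial ring $F[x,y]$. *)

(* F[x,y] is modelled as {poly {poly F}}:
   the inner variable is x (embedded as 'X%:P), the outer one is y ('X). *)
From mathcomp Require Import all_boot all_order all_algebra.
Set Implicit Arguments. Unset Strict Implicit. Unset Printing Implicit Defensive.
Import GRing.Theory.
Local Open Scope ring_scope.

Definition irreducible_elt (R : idomainType) (f : R) : Prop :=
  [/\ f != 0, f \isn't a GRing.unit &
      forall a b : R, f = a * b -> a \is a GRing.unit \/ b \is a GRing.unit].

Definition bvarx (F : fieldType) : {poly {poly F}} := ('X)%:P.
Definition bvary (F : fieldType) : {poly {poly F}} := 'X.

From mathcomp Require Import all_boot all_order all_algebra.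
From mathcomp Require Import qfpoly separable.
From Stdlib Require Import Classical.
Import GRing.Theory.
Local Open Scope ring_scope.

(* Over F[x], f = (x^n + 1) y^n + x^n.  As n is invertible in F, x^n + 1 is
   separable, so a monic irreducible factor q of it has q^2 not dividing
   x^n + 1, and q does not divide x^n.  Modulo q, f becomes the nonzero constant
   x^n of (F[x]/q)[y], so in a factorisation f = g h all coefficients of positive
   y-degree of g and h are divisible by q; if both g and h had positive degree,
   q^2 would divide the leading coefficient x^n + 1 (Eisenstein's criterion read
   at the leading coefficient).  Hence one factor is constant in y; it divides
   the coprime coefficients x^n and x^n + 1, so it is a unit. *)

Lemma exists_monic_irreducible_dvdp (F : fieldType) (c : {poly F}) :
  (1 < size c)%N -> exists q, [/\ irreducible_poly q, q \is monic & q %| c].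
Proof.
have [m] := ubnP (size c); elim: m c => // m IH c /ltnSE size_c c_gt1.
have c_neq0 : c != 0 by rewrite -size_poly_gt0 (ltn_trans _ c_gt1).
have lc_neq0 : (lead_coef c)^-1 != 0 by rewrite invr_eq0 lead_coef_eq0.
have [c_irr | c_red] := classic (irreducible_poly c).
  exists ((lead_coef c)^-1 *: c); split.
  - split=> [|d d_neq1]; first by rewrite size_scale.
    rewrite dvdpZr // => /(c_irr.2 d d_neq1) /eqp_trans; apply.
    by rewrite eqp_sym eqp_scale.
  - by rewrite monicE lead_coefZ mulVf ?lead_coef_eq0.
  - by rewrite dvdpZl.
have [d [d_neq1 d_dvd_c d_neqp_c]] :
    exists d : {poly F}, [/\ size d != 1, d %| c & ~ d %= c].
  apply: NNPP => no_d; apply: c_red; split=> // d d_neq1 d_dvd_c.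
  by apply: NNPP => d_neqp_c; apply: no_d; exists d.
have d_neq0 : d != 0 by apply: contraNneq c_neq0 => d0; rewrite -dvd0p -d0.
have d_lt_c : (size d < size c)%N.
  by rewrite ltn_neqAle dvdp_leq // (dvdp_size_eqp d_dvd_c) andbT; apply/negP.
have d_gt1 : (1 < size d)%N.
  by rewrite ltn_neqAle eq_sym d_neq1 size_poly_gt0.
have [q [q_irr q_monic q_dvd_d]] := IH d (leq_trans d_lt_c size_c) d_gt1.
by exists q; split=> //; apply: dvdp_trans d_dvd_c.
Qed.

Lemma separable_XnaddC (R : idomainType) n (c : R) :
  n%:R != 0 :> R -> c != 0 -> separable_poly ('X^n + c%:P).
Proof.
move=> n_neq0 c_neq0.
have n_gt0 : (0 < n)%N by rewrite lt0n; apply: contraNneq n_neq0 => ->.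
rewrite unlock derivD derivC addr0 derivXn -scaler_nat coprimepZr //.
rewrite coprimep_sym -(prednK n_gt0) exprS prednK // coprimep_addl_mul.
by rewrite -[c%:P]mulr1 mul_polyC coprimepZr // coprimep1.
Qed.

Lemma unit_const_factor (F : fieldType) (f a b : {poly {poly F}}) i j :
  coprimep f`_i f`_j -> f = a * b -> size a = 1 -> a \is a GRing.unit.
Proof.
move=> + f_ab size_a; rewrite f_ab [a]size1_polyC ?size_a // !coefCM => cop_f.
have : coprimep a`_0 a`_0.
  by apply: coprimep_dvdl (dvdp_mulIl _ _) (coprimep_dvdr (dvdp_mulIl _ _) cop_f).
rewrite coprimepp => /eqP size_a0; apply: rmorph_unit.
have : lead_coef a`_0 != 0 by rewrite lead_coef_eq0 -size_poly_eq0 size_a0.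
by rewrite poly_unitE size_a0 unitfE lead_coefE size_a0.
Qed.

Section ReductionModuloIrreducible.

Context {F : fieldType} {q : {poly F}} (qI : monic_irreducible_poly q).

(* The codomain is typed as [{poly %/ q with qI}] to get its field structure. *)
Let red : {poly F} -> {poly %/ q with qI} := in_qpoly q.

Lemma in_qpoly_eq0 p : (red p == 0) = (q %| p).
Proof. by rewrite -val_eqE /= (mk_monicE qI) dvdpE. Qed.

Lemma size_map_in_qpoly_le1 (a : {poly {poly F}}) :
  (size (map_poly red a) <= 1)%N <-> forall i, (0 < i)%N -> q %| a`_i.
Proof.
split=> [/leq_sizeP red_a i i_gt0 | q_dvd_a].
  by rewrite -in_qpoly_eq0 /red -coef_map red_a.
apply/leq_sizeP => i i_gt0.
by rewrite coef_map; apply/eqP; rewrite in_qpoly_eq0 q_dvd_a.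
Qed.

Lemma eisenstein_lead (f a b : {poly {poly F}}) :
  (forall i, (0 < i)%N -> q %| f`_i) -> ~~ (q %| f`_0) ->
  ~~ (q ^+ 2 %| lead_coef f) -> f = a * b -> size a = 1 \/ size b = 1.
Proof.
move=> q_dvd_f qN_f0 q2N_lf f_ab.
have red_f : map_poly red f = (red f`_0)%:P.
  by rewrite [LHS]size1_polyC ?coef_map // size_map_in_qpoly_le1.
have /andP[unit_a unit_b] :
    (map_poly red a \is a GRing.unit) && (map_poly red b \is a GRing.unit).
  have red_ab : map_poly red a * map_poly red b = (red f`_0)%:P.
    by rewrite -red_f f_ab rmorphM.
  by rewrite -unitrM red_ab rmorph_unit // unitfE in_qpoly_eq0.
have q_dvd_coef (c : {poly {poly F}}) : map_poly red c \is a GRing.unit ->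
    forall i, (0 < i)%N -> q %| c`_i.
  rewrite poly_unitE => /andP[/eqP size_c _].
  by apply/size_map_in_qpoly_le1; rewrite size_c.
have f_neq0 : f != 0 by apply: contraNneq qN_f0 => ->; rewrite coef0 dvdp0.
have [a_neq0 b_neq0] : a != 0 /\ b != 0.
  by apply/norP; rewrite -mulf_eq0 -f_ab.
have [a_gt1 | a_le1] := ltnP 1 (size a); last first.
  by left; apply/anti_leq; rewrite a_le1 size_poly_gt0.
have [b_gt1 | b_le1] := ltnP 1 (size b); last first.
  by right; apply/anti_leq; rewrite b_le1 size_poly_gt0.
case/negP: q2N_lf; rewrite f_ab lead_coefM expr2 !lead_coefE.
by rewrite dvdp_mul // q_dvd_coef // ltn_predRL.
Qed.

End ReductionModuloIrreducible.

Lemma irreducible_CXnaddC (F : fieldType) (q a b : {poly F}) n :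
  monic_irreducible_poly q -> (0 < n)%N -> q %| a -> ~~ (q ^+ 2 %| a) ->
  coprimep a b -> irreducible_elt (a%:P * 'X^n + b%:P).
Proof.
move=> qI n_gt0 q_dvd_a q2N_a coprime_ab; set f := _ + _.
have a_neq0 : a != 0 by apply: contraNneq q2N_a => ->; rewrite dvdp0.
have n_neq0 : n != 0%N by rewrite -lt0n.
have coef_f i : f`_i = a * (i == n)%:R + (if i == 0%N then b else 0).
  by rewrite coefD coefCM coefXn coefC.
have f0 : f`_0 = b by rewrite coef_f eq_sym (negbTE n_neq0) mulr0 add0r.
have size_f : size f = n.+1.
  by rewrite size_polyDl size_Cmul ?size_polyXn // size_polyC; case: (_ != 0).
have lead_f : lead_coef f = a.
  by rewrite lead_coefE size_f coef_f eqxx mulr1 (negbTE n_neq0) addr0.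
have q_dvd_f i : (0 < i)%N -> q %| f`_i.
  by move=> i_gt0; rewrite coef_f (negbTE (lt0n_neq0 i_gt0)) addr0 dvdp_mulr.
have qN_f0 : ~~ (q %| f`_0).
  by rewrite f0 -(irreducible_poly_coprime _ qI.1) (coprimep_dvdr q_dvd_a coprime_ab).
have q2N_lf : ~~ (q ^+ 2 %| lead_coef f) by rewrite lead_f.
have coprime_f : coprimep f`_0 (lead_coef f) by rewrite f0 lead_f coprimep_sym.
split=> [||c d f_cd]; first by rewrite -size_poly_eq0 size_f.
  by rewrite poly_unitE size_f eqSS (negbTE n_neq0).
have [size_c | size_d] := eisenstein_lead qI _ _ _ q_dvd_f qN_f0 q2N_lf f_cd.
  by left; apply: unit_const_factor coprime_f f_cd size_c.
by right; rewrite mulrC in f_cd; apply: unit_const_factor coprime_f f_cd size_d.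
Qed.

Theorem lemma4p1 (F : fieldType) (p n : nat) (hp : p \in [pchar F])
  (hpn : ~~ (p %| n)%N) :
  irreducible_elt ((bvarx F) ^+ n + (bvary F) ^+ n
                   + (bvarx F) ^+ n * (bvary F) ^+ n).
Proof.
have n_gt0 : (0 < n)%N by rewrite lt0n; apply: contraNneq hpn => ->.
have n_neq0 : n%:R != 0 :> F by rewrite -(dvdn_pcharf hp).
have -> : bvarx F ^+ n + bvary F ^+ n + bvarx F ^+ n * bvary F ^+ n
          = ('X^n + 1)%:P * 'X^n + ('X^n)%:P.
  rewrite /bvarx /bvary -rmorphXn rmorphD rmorph1 /= mulrDl mul1r.
  by rewrite addrC (addrC ('X^n)%:P) addrA.
have [q [q_irr q_monic q_dvd_Xn1]] :
    exists q : {poly F}, [/\ irreducible_poly q, q \is monic & q %| 'X^n + 1].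
  by apply: exists_monic_irreducible_dvdp; rewrite -polyC1 size_XnaddC.
apply: (@irreducible_CXnaddC F q _ _ n (q_irr, q_monic)) => //.
  rewrite -polyC1 separable_nosquare ?separable_XnaddC ?oner_eq0 //.
  by rewrite (gtn_eqF q_irr.1).
by rewrite coprimep_sym -[X in X + _]mul1r coprimep_addl_mul coprimep1.
Qed.
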